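(* Let $\{\Phi_\theta\}_{\theta\in\mathbb R}$ be a differentiable family of channels between finite-dimensional spaces, $\Delta_\theta=\mathrm d\Phi_\theta/\mathrm d\theta$, and fix $\theta_0$. For every asymptotically unbiased adaptive estimator $\{(\mathcal K_n,\rho^n,\boldsymbol\Psi^n,M^n)\}_{n\ge1}$ with estimates $\hat\theta^n$, \[ \liminf_{n\to\infty} n\,\mathbb E_{\theta_0}\big(\hat\theta^n-\theta_0\big)^2\ \ge\ \big(G^{\min,a}_{\Phi_{\theta_0}}(\Delta_{\theta_0})\big)^{-1}. \]
   Context: A channel is a CPTP linear map; $J_p(\delta)=\sum_y\delta(y)^2/p(y)$ for $p$ a probability distribution on a finite set and real $\delta$ with $\sum\delta=0$. An $n$-step adaptive strategy for channels from $\mathcal H_{\rm in}$ to $\mathcal H_{\rm out}$ is $(\mathcal K,\rho,\boldsymbol\Psi^n)$ with $\mathcal K$ a finite-dimensional auxiliary space, $\rho$ a state on $\mathcal H_{\rm in}\otimes\mathcal K$, $\Psi_1$ a channel on $\mathcal H_{\rm in}\otimes\mathcal K$ and $\Psi_k$ ($2\le k\le n$) channels from $\mathcal H_{\rm out}\otimes\mathcal K$ to $\mathcal H_{\rm in}\otimes\mathcal K$; $\Phi^{\#n}(\boldsymbol\Psi^n):=((\Phi\otimes\mathbf I)\circ\Psi_n)\circ\cdots\circ((\Phi\otimes\mathbf I)\circ\Psi_1)$, and $\Delta^{(\#n)}(\boldsymbol\Psi^n)$ is the sum over $j$ of the same composition with the $j$-th factor $\Phi\otimes\mathbf I$ replaced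 by $\Delta\otimes\mathbf I$. $G^{\min,a}_\Phi(\Delta):=\lim_n\frac1n\sup J_{M(\Phi^{\#n}(\boldsymbol\Psi^n)(\rho))}\big(M(\Delta^{(\#n)}(\boldsymbol\Psi^n)(\rho))\big)$, the supremum over $n$-step adaptive strategies and POVMs $M$ (finitely many outcomes) on $\mathcal H_{\rm out}\otimes\mathcal K$. An adaptive estimator is a sequence $(\mathcal K_n,\rho^n,\boldsymbol\Psi^n,M^n)$ where $(\mathcal K_n,\rho^n,\boldsymbol\Psi^n)$ is an $n$-step adaptive strategy and $M^n$ is a POVM on $\mathcal H_{\rm out}\otimes\mathcal K_n$ with finitely many real outcomes; the estimate $\hat\theta^n$ is the outcome, distributed according to $M^n(\Phi_\theta^{\#n}(\boldsymbol\Psi^n)(\rho^n))$, and $\mathbb E_\theta$ denotes expectation under this distribution. It is asymptotically unbiased if $\lim_n\mathbb E_\theta[\hat\theta^n]=\theta$ and $\lim_n\frac{\mathrm d}{\mathrm d\theta}\mathbb E_\theta[\hat\theta^n]=1$ for all $\theta$. *)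

From Stdlib Require Import Reals List.
Open Scope R_scope.

Record C : Type := mkC { Cre : R ; Cim : R }.
Definition C0 : C := mkC 0 0.
Definition C1 : C := mkC 1 0.
Definition Cadd (a b : C) : C := mkC (Cre a + Cre b) (Cim a + Cim b).
Definition Cmul (a b : C) : C :=
  mkC (Cre a * Cre b - Cim a * Cim b) (Cre a * Cim b + Cim a * Cre b).
Definition Cconj (a : C) : C := mkC (Cre a) (- Cim a).

Fixpoint csum (n : nat) (f : nat -> C) : C :=
  match n with O => C0 | S m => Cadd (csum m f) (f m) end.
Fixpoint rsum_list (l : list R) : R :=
  match l with nil => 0 | x :: l' => x + rsum_list l' end.

(* ---------- matrices and superoperators ----------
   A d x d matrix is a function nat -> nat -> C of which only the entries
   with indices < d matter.  A superoperator from dimension a to b is given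
   by its coefficients: (S i j k l) is the (i,j) entry of the image of |k><l|. *)
Definition Mat := nat -> nat -> C.
Definition Superop := nat -> nat -> nat -> nat -> C.

Definition so_apply (a : nat) (S : Superop) (X : Mat) : Mat :=
  fun i j => csum a (fun k => csum a (fun l => Cmul (S i j k l) (X k l))).

(* Tensor product convention: H (dim a) (x) K (dim k) has basis index i*k+p
   (i < a, p < k).  (S (x) I_K)(X), for S from dim a to dim b. *)
Definition so_tensor_id_apply (a k : nat) (S : Superop) (X : Mat) : Mat :=
  fun I J => csum a (fun i2 => csum a (fun j2 =>
     Cmul (S (I / k)%nat (J / k)%nat i2 j2)
          (X (i2 * k + I mod k)%nat (j2 * k + J mod k)%nat))).

Definition Mtrace (d : nat) (X : Mat) : C := csum d (fun i => X i i).
Definition tr_prod (d : nat) (M X : Mat) : C :=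
  csum d (fun i => csum d (fun j => Cmul (M i j) (X j i))).

Definition quad (d : nat) (X : Mat) (v : nat -> C) : C :=
  csum d (fun i => csum d (fun j => Cmul (Cmul (Cconj (v i)) (X i j)) (v j))).

Definition PSD (d : nat) (X : Mat) : Prop :=
  forall v : nat -> C, Cim (quad d X v) = 0 /\ 0 <= Cre (quad d X v).

Definition is_state (d : nat) (rho : Mat) : Prop :=
  PSD d rho /\ Mtrace d rho = C1.

Definition is_channel (a b : nat) (S : Superop) : Prop :=
  (forall (k : nat) (X : Mat), PSD (a * k) X ->
       PSD (b * k) (so_tensor_id_apply a k S X)) /\
  (forall X : Mat, Mtrace b (so_apply a S X) = Mtrace a X).

Definition Msum_list (Ms : list Mat) : Mat :=
  fun i j => fold_right Cadd C0 (map (fun M => M i j) Ms).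
Definition is_povm (d : nat) (Ms : list Mat) : Prop :=
  Forall (PSD d) Ms /\
  (forall i j, (i < d)%nat -> (j < d)%nat ->
     Msum_list Ms i j = if Nat.eqb i j then C1 else C0).

Definition prob (d : nat) (M X : Mat) : R := Cre (tr_prod d M X).

(* J_p(delta) = sum_y delta(y)^2 / p(y)  (terms with p(y) = 0 are taken 0) *)
Fixpoint Jp (p dl : list R) : R :=
  match p, dl with
  | p0 :: p', d0 :: d' =>
      (if Rlt_dec 0 p0 then d0 ^ 2 / p0 else 0) + Jp p' d'
  | _, _ => 0
  end.

Record strategy : Type := mkStrat {
  s_dk : nat;              (* dim of auxiliary space K *)
  s_rho : Mat;             (* state on H_in (x) K *)
  s_psi1 : Superop;        (* channel on H_in (x) K *)
  s_psi : nat -> Superop   (* s_psi k, 2 <= k <= n : H_out (x) K -> H_in (x) K *)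
}.

Definition is_strategy (din dout n : nat) (s : strategy) : Prop :=
  is_state (din * s_dk s) (s_rho s) /\
  is_channel (din * s_dk s) (din * s_dk s) (s_psi1 s) /\
  (forall k, (2 <= k <= n)%nat ->
     is_channel (dout * s_dk s) (din * s_dk s) (s_psi s k)).

(* ((F m (x) I) o Psi_m) o ... o ((F 1 (x) I) o Psi_1) applied to rho *)
Fixpoint run (din dout : nat) (s : strategy) (F : nat -> Superop) (m : nat)
  : Mat :=
  match m with
  | O => s_rho s
  | S m' =>
      match m' with
      | O => so_tensor_id_apply din (s_dk s) (F 1%nat)
               (so_apply (din * s_dk s) (s_psi1 s) (s_rho s))
      | S _ => so_tensor_id_apply din (s_dk s) (F m)
               (so_apply (dout * s_dk s) (s_psi s m)
                  (run din dout s F m'))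
      end
  end.

Definition Phi_sharp (din dout : nat) (Phi : Superop) (s : strategy) (n : nat)
  : Mat := run din dout s (fun _ => Phi) n.

Definition Delta_sharp (din dout : nat) (Phi Delta : Superop) (s : strategy)
  (n : nat) : Mat :=
  fun a b => csum n (fun j0 =>
     run din dout s (fun m => if Nat.eqb m (S j0) then Delta else Phi) n a b).

Definition Jset (din dout : nat) (Phi Delta : Superop) (n : nat) (x : R)
  : Prop :=
  exists (s : strategy) (Ms : list Mat),
    is_strategy din dout n s /\ is_povm (dout * s_dk s) Ms /\
    x = Jp (map (fun M => prob (dout * s_dk s) M (Phi_sharp din dout Phi s n)) Ms)
           (map (fun M => prob (dout * s_dk s) M
                   (Delta_sharp din dout Phi Delta s n)) Ms).

Inductive ER : Type := ER_fin (r : R) | ER_pinf.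

Definition is_sup (S : R -> Prop) (s : ER) : Prop :=
  match s with
  | ER_fin r => is_lub S r
  | ER_pinf => forall M : R, exists x, S x /\ M < x
  end.

Definition ER_div_nat (s : ER) (n : nat) : ER :=
  match s with ER_fin r => ER_fin (r / INR n) | ER_pinf => ER_pinf end.

Definition ER_gt (a : ER) (M : R) : Prop :=
  match a with ER_fin r => M < r | ER_pinf => True end.

Definition ER_lim (a : nat -> ER) (g : ER) : Prop :=
  match g with
  | ER_fin l => forall eps, 0 < eps -> exists N, forall n, (N <= n)%nat ->
                  exists r, a n = ER_fin r /\ Rabs (r - l) < eps
  | ER_pinf => forall M, exists N, forall n, (N <= n)%nat -> ER_gt (a n) M
  end.

Definition Gmin_is (din dout : nat) (Phi Delta : Superop) (g : ER) : Prop :=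
  exists s : nat -> ER,
    (forall n, is_sup (Jset din dout Phi Delta n) (s n)) /\
    ER_lim (fun n => ER_div_nat (s n) n) g.

(* 1/g in [0, +oo], with 1/0 = +oo and 1/+oo = 0 *)
Definition ER_inv (g : ER) : ER :=
  match g with
  | ER_pinf => ER_fin 0
  | ER_fin r => if Rle_dec r 0 then ER_pinf else ER_fin (/ r)
  end.

Definition liminf_ge (x : nat -> R) (L : ER) : Prop :=
  forall c : R, ER_gt L c -> exists N, forall n, (N <= n)%nat -> c < x n.

Definition is_derivative_family (din dout : nat) (Phi Delta : R -> Superop)
  : Prop :=
  forall (i j k l : nat) (t : R),
    (i < dout)%nat -> (j < dout)%nat -> (k < din)%nat -> (l < din)%nat ->
    derivable_pt_lim (fun u => Cre (Phi u i j k l)) t (Cre (Delta t i j k l)) /\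
    derivable_pt_lim (fun u => Cim (Phi u i j k l)) t (Cim (Delta t i j k l)).

(* n-th element: n-step strategy and real-valued POVM (outcome, effect) *)
Definition estimator := nat -> (strategy * list (R * Mat)).

Definition is_estimator (din dout : nat) (est : estimator) : Prop :=
  forall n, (1 <= n)%nat ->
    is_strategy din dout n (fst (est n)) /\
    is_povm (dout * s_dk (fst (est n))) (map snd (snd (est n))).

Definition est_expect (din dout : nat) (Phi : R -> Superop) (est : estimator)
  (theta : R) (n : nat) (f : R -> R) : R :=
  let s := fst (est n) in
  rsum_list (map (fun yM => f (fst yM) *
      prob (dout * s_dk s) (snd yM) (Phi_sharp din dout (Phi theta) s n))
    (snd (est n))).

Definition asymp_unbiased (din dout : nat) (Phi : R -> Superop)
  (est : estimator) : Prop :=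
  forall theta : R,
    Un_cv (fun n => est_expect din dout Phi est theta n (fun y => y)) theta /\
    exists d : nat -> R,
      (forall n, derivable_pt_lim
         (fun t => est_expect din dout Phi est t n (fun y => y)) theta (d n)) /\
      Un_cv d 1.

(* For fixed n, let p_theta be the outcome distribution of the n-th estimator.  It is a
   probability vector (tr(M X) >= 0 for positive semidefinite M, X, proved by induction on
   the dimension through Schur complements), differentiable in theta, and by the Leibniz
   rule for the n-fold composition Phi^{#n} its derivative at theta0 is the outcome
   distribution delta of Delta^{(#n)}.  Hence sum_y delta_y = 0 and delta_y = 0 wherever
   p_y = 0, so the derivative of the mean is sum_y (y - theta0) delta_y and Cauchy-Schwarz
   gives the finite Cramer-Rao bound
     (d/dtheta E[theta^n])^2 <= E[(theta^n - theta0)^2] J_p(delta),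
   where J_p(delta) is at most the supremum defining G at step n.  Dividing by n and using
   that the derivative of the mean tends to 1 gives the asymptotic bound. *)

From Pilot Require Import Defs.
From Stdlib Require Import Reals List Lra Lia FunctionalExtensionality.
Open Scope R_scope.
(* Makes [C] denote the complex numbers of Defs again, not the binomial coefficient of Reals. *)
Import Defs.

Lemma Ceq (a b : C) : Cre a = Cre b -> Cim a = Cim b -> a = b.
Proof. destruct a, b; simpl; intros; subst; reflexivity. Qed.

Ltac cring := apply Ceq; simpl; cbv beta; ring.

Lemma Cadd_0_l a : Cadd C0 a = a. Proof. destruct a; cring. Qed.
Lemma Cadd_0_r a : Cadd a C0 = a. Proof. destruct a; cring. Qed.
Lemma Cmul_0_l a : Cmul C0 a = C0. Proof. cring. Qed.
Lemma Cmul_0_r a : Cmul a C0 = C0. Proof. cring. Qed.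
Lemma Cmul_1_l a : Cmul C1 a = a. Proof. destruct a; cring. Qed.

Lemma Cre_Cadd a b : Cre (Cadd a b) = Cre a + Cre b. Proof. reflexivity. Qed.
Lemma Cre_Cmul_real r z : Cre (Cmul (mkC r 0) z) = r * Cre z. Proof. simpl; ring. Qed.

Lemma csum_S n f : csum (S n) f = Cadd (csum n f) (f n). Proof. reflexivity. Qed.

Lemma csum_ext n f g : (forall i, (i < n)%nat -> f i = g i) -> csum n f = csum n g.
Proof.
  induction n as [|n IH]; intros H; simpl; auto.
  rewrite IH, H by first [lia | intros; apply H; lia]; reflexivity.
Qed.

Lemma csum_zero n f : (forall i, (i < n)%nat -> f i = C0) -> csum n f = C0.
Proof.
  induction n as [|n IH]; intros H; simpl; auto.
  rewrite IH, H by first [lia | intros; apply H; lia]; cring.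
Qed.

Lemma csum_add n f g : csum n (fun i => Cadd (f i) (g i)) = Cadd (csum n f) (csum n g).
Proof. induction n as [|n IH]; simpl; [cring|]. rewrite IH; cring. Qed.

Lemma csum_mul_l n c f : Cmul c (csum n f) = csum n (fun i => Cmul c (f i)).
Proof. induction n as [|n IH]; simpl; [cring|]. rewrite <- IH; cring. Qed.

Lemma csum_mul_r n c f : Cmul (csum n f) c = csum n (fun i => Cmul (f i) c).
Proof. induction n as [|n IH]; simpl; [cring|]. rewrite <- IH; cring. Qed.

Lemma csum_swap n m (f : nat -> nat -> C) :
  csum n (fun i => csum m (fun j => f i j)) = csum m (fun j => csum n (fun i => f i j)).
Proof.
  induction n as [|n IH]; simpl.
  - symmetry; apply csum_zero; auto.
  - rewrite IH, <- csum_add; reflexivity.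
Qed.

Lemma csum_plus n m f :
  csum (n + m) f = Cadd (csum n f) (csum m (fun j => f (n + j)%nat)).
Proof.
  induction m as [|m IH]; simpl.
  - rewrite Nat.add_0_r; cring.
  - rewrite Nat.add_succ_r; simpl; rewrite IH; cring.
Qed.

Lemma csum_mul_dim a k f :
  csum (a * k) f = csum a (fun i => csum k (fun p => f (i * k + p)%nat)).
Proof.
  induction a as [|a IH]; simpl; [reflexivity|].
  rewrite Nat.add_comm, csum_plus, IH; reflexivity.
Qed.

Lemma csum_delta n a f :
  (a < n)%nat -> csum n (fun i => if Nat.eqb i a then f i else C0) = f a.
Proof.
  induction n as [|n IH]; intros Ha; simpl; [lia|].
  destruct (Nat.eqb_spec n a) as [->|Hna].
  - rewrite csum_zero; [apply Cadd_0_l|].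
    intros i Hi; destruct (Nat.eqb_spec i a); [lia|reflexivity].
  - rewrite IH by lia; apply Cadd_0_r.
Qed.

Definition Cderivable_pt_lim (f : R -> C) (t : R) (v : C) : Prop :=
  derivable_pt_lim (fun u => Cre (f u)) t (Cre v) /\
  derivable_pt_lim (fun u => Cim (f u)) t (Cim v).

Lemma Cderivable_pt_lim_const c t : Cderivable_pt_lim (fun _ => c) t C0.
Proof. split; apply (derivable_pt_lim_const _ t). Qed.

Lemma Cderivable_pt_lim_ext f g t v :
  (forall u, f u = g u) -> Cderivable_pt_lim f t v -> Cderivable_pt_lim g t v.
Proof.
  intros E [Hre Him]; split.
  - apply (derivable_pt_lim_ext (fun u => Cre (f u))); [|exact Hre].
    intro u; rewrite E; reflexivity.
  - apply (derivable_pt_lim_ext (fun u => Cim (f u))); [|exact Him].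
    intro u; rewrite E; reflexivity.
Qed.

Lemma Cderivable_pt_lim_add f g t v w :
  Cderivable_pt_lim f t v -> Cderivable_pt_lim g t w ->
  Cderivable_pt_lim (fun u => Cadd (f u) (g u)) t (Cadd v w).
Proof. intros [H1 H2] [H3 H4]; split; apply derivable_pt_lim_plus; assumption. Qed.

Lemma Cderivable_pt_lim_mul f g t v w :
  Cderivable_pt_lim f t v -> Cderivable_pt_lim g t w ->
  Cderivable_pt_lim (fun u => Cmul (f u) (g u)) t (Cadd (Cmul (f t) w) (Cmul v (g t))).
Proof.
  intros [H1 H2] [H3 H4]; split; simpl.
  - replace (Cre (f t) * Cre w - Cim (f t) * Cim w + (Cre v * Cre (g t) - Cim v * Cim (g t)))
      with (Cre v * Cre (g t) + Cre (f t) * Cre w - (Cim v * Cim (g t) + Cim (f t) * Cim w))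
      by ring.
    apply derivable_pt_lim_minus; apply derivable_pt_lim_mult; assumption.
  - replace (Cre (f t) * Cim w + Cim (f t) * Cre w + (Cre v * Cim (g t) + Cim v * Cre (g t)))
      with (Cre v * Cim (g t) + Cre (f t) * Cim w + (Cim v * Cre (g t) + Cim (f t) * Cre w))
      by ring.
    apply derivable_pt_lim_plus; apply derivable_pt_lim_mult; assumption.
Qed.

Lemma Cderivable_pt_lim_mul_const_l c f t v :
  Cderivable_pt_lim f t v -> Cderivable_pt_lim (fun u => Cmul c (f u)) t (Cmul c v).
Proof.
  intros H. replace (Cmul c v) with (Cadd (Cmul c v) (Cmul C0 (f t))) by cring.
  apply Cderivable_pt_lim_mul; [apply Cderivable_pt_lim_const | exact H].
Qed.

Lemma Cderivable_pt_lim_csum n (f : nat -> R -> C) (v : nat -> C) t :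
  (forall i, (i < n)%nat -> Cderivable_pt_lim (f i) t (v i)) ->
  Cderivable_pt_lim (fun u => csum n (fun i => f i u)) t (csum n v).
Proof.
  induction n as [|n IH]; intros H; simpl; [apply Cderivable_pt_lim_const|].
  apply Cderivable_pt_lim_add; [apply IH; intros; apply H|apply H]; lia.
Qed.

Lemma so_apply_csum d S m (X : nat -> Mat) I J :
  csum m (fun j => so_apply d S (X j) I J) =
  so_apply d S (fun x y => csum m (fun j => X j x y)) I J.
Proof.
  unfold so_apply; rewrite csum_swap; apply csum_ext; intros k _.
  rewrite csum_swap; apply csum_ext; intros l _; rewrite csum_mul_l; reflexivity.
Qed.

Lemma so_tensor_id_apply_csum a k S m (X : nat -> Mat) I J :
  csum m (fun j => so_tensor_id_apply a k S (X j) I J) =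
  so_tensor_id_apply a k S (fun x y => csum m (fun j => X j x y)) I J.
Proof.
  unfold so_tensor_id_apply; rewrite csum_swap; apply csum_ext; intros i _.
  rewrite csum_swap; apply csum_ext; intros l _; rewrite csum_mul_l; reflexivity.
Qed.

Lemma Cderivable_so_apply d S (X : R -> Mat) X' t I J :
  (forall k l, (k < d)%nat -> (l < d)%nat ->
     Cderivable_pt_lim (fun u => X u k l) t (X' k l)) ->
  Cderivable_pt_lim (fun u => so_apply d S (X u) I J) t (so_apply d S X' I J).
Proof.
  intros HX; unfold so_apply.
  apply Cderivable_pt_lim_csum; intros k Hk; apply Cderivable_pt_lim_csum; intros l Hl.
  apply Cderivable_pt_lim_mul_const_l, HX; assumption.
Qed.

Lemma Cderivable_so_tensor_id_apply a k (F : R -> Superop) F' (X : R -> Mat) X' t I J :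
  (forall i j, (i < a)%nat -> (j < a)%nat ->
     Cderivable_pt_lim (fun u => F u (I / k)%nat (J / k)%nat i j) t
       (F' (I / k)%nat (J / k)%nat i j)) ->
  (forall x y, Cderivable_pt_lim (fun u => X u x y) t (X' x y)) ->
  Cderivable_pt_lim (fun u => so_tensor_id_apply a k (F u) (X u) I J) t
    (Cadd (so_tensor_id_apply a k (F t) X' I J) (so_tensor_id_apply a k F' (X t) I J)).
Proof.
  intros HF HX; unfold so_tensor_id_apply; rewrite <- csum_add.
  apply Cderivable_pt_lim_csum; intros i Hi; rewrite <- csum_add.
  apply Cderivable_pt_lim_csum; intros j Hj.
  apply Cderivable_pt_lim_mul; [apply HF; assumption | apply HX].
Qed.

Section Run.
Variables (din dout : nat) (s : strategy).

(* The dimension of the output of the first m steps, and the channel Psi_(m+1) applied to it. *)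
Definition run_dim (m : nat) : nat :=
  match m with O => din * s_dk s | S _ => dout * s_dk s end%nat.

Definition run_psi (m : nat) : Superop :=
  match m with O => s_psi1 s | S _ => s_psi s (S m) end.

Lemma run_succ F m :
  run din dout s F (S m) =
  so_tensor_id_apply din (s_dk s) (F (S m))
    (so_apply (run_dim m) (run_psi m) (run din dout s F m)).
Proof. destruct m; reflexivity. Qed.

Lemma run_agree F G m :
  (forall k, (1 <= k <= m)%nat -> F k = G k) -> run din dout s F m = run din dout s G m.
Proof.
  induction m as [|m IH]; intros H; [reflexivity|].
  rewrite !run_succ, IH, H by first [lia | intros; apply H; lia]; reflexivity.
Qed.

Lemma Delta_sharp_succ F D m a b :
  Delta_sharp din dout F D s (S m) a b =
  Cadd (so_tensor_id_apply din (s_dk s) F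
          (so_apply (run_dim m) (run_psi m) (Delta_sharp din dout F D s m)) a b)
       (so_tensor_id_apply din (s_dk s) D
          (so_apply (run_dim m) (run_psi m) (Phi_sharp din dout F s m)) a b).
Proof.
  unfold Delta_sharp at 1; rewrite csum_S, run_succ, Nat.eqb_refl.
  rewrite (run_agree (fun k => if Nat.eqb k (S m) then D else F) (fun _ => F) m)
    by (intros k Hk; destruct (Nat.eqb_spec k (S m)); [lia | reflexivity]).
  rewrite (csum_ext m _ (fun j => so_tensor_id_apply din (s_dk s) F
      (so_apply (run_dim m) (run_psi m)
         (run din dout s (fun k => if Nat.eqb k (S j) then D else F) m)) a b)).
  2:{ intros j Hj; rewrite run_succ; destruct (Nat.eqb_spec (S m) (S j)); [lia|reflexivity]. }
  rewrite so_tensor_id_apply_csum; f_equal; f_equal.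
  apply functional_extensionality; intro x; apply functional_extensionality; intro y.
  apply so_apply_csum.
Qed.

Lemma Cderivable_Phi_sharp (F D : R -> Superop) t m a b :
  (forall i j k l, (i < dout)%nat -> (j < dout)%nat -> (k < din)%nat -> (l < din)%nat ->
     Cderivable_pt_lim (fun u => F u i j k l) t (D t i j k l)) ->
  s_dk s <> 0%nat ->
  m = 0%nat \/ (a < dout * s_dk s /\ b < dout * s_dk s)%nat ->
  Cderivable_pt_lim (fun u => Phi_sharp din dout (F u) s m a b) t
    (Delta_sharp din dout (F t) (D t) s m a b).
Proof.
  intros HFD Hdk; revert a b; induction m as [|m IH]; intros a b Hab.
  - exact (Cderivable_pt_lim_const (s_rho s a b) t).
  - destruct Hab as [Hab | [Ha Hb]]; [discriminate|].
    rewrite Delta_sharp_succ.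
    eapply Cderivable_pt_lim_ext; [intro u; unfold Phi_sharp; rewrite run_succ; reflexivity|].
    apply Cderivable_so_tensor_id_apply.
    + intros i j Hi Hj; apply HFD; try assumption;
        apply Nat.Div0.div_lt_upper_bound; lia.
    + intros x y; apply Cderivable_so_apply; intros k l Hk Hl; apply IH.
      destruct m; [left; reflexivity | right; simpl in Hk, Hl; lia].
Qed.

End Run.

Definition unit_vec (a : nat) (x : C) : nat -> C := fun k => if Nat.eqb k a then x else C0.
Definition vadd (u v : nat -> C) : nat -> C := fun k => Cadd (u k) (v k).

Definition sesq (d : nat) (X : Mat) (u v : nat -> C) : C :=
  csum d (fun i => csum d (fun j => Cmul (Cmul (Cconj (u i)) (X i j)) (v j))).

Lemma quad_sesq d X v : quad d X v = sesq d X v v. Proof. reflexivity. Qed.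

Lemma sesq_addl d X u1 u2 v : sesq d X (vadd u1 u2) v = Cadd (sesq d X u1 v) (sesq d X u2 v).
Proof.
  unfold sesq; rewrite <- csum_add; apply csum_ext; intros i _.
  rewrite <- csum_add; apply csum_ext; intros j _; unfold vadd; cring.
Qed.

Lemma sesq_addr d X u v1 v2 : sesq d X u (vadd v1 v2) = Cadd (sesq d X u v1) (sesq d X u v2).
Proof.
  unfold sesq; rewrite <- csum_add; apply csum_ext; intros i _.
  rewrite <- csum_add; apply csum_ext; intros j _; unfold vadd; cring.
Qed.

Lemma csum_unit_vec_r d b y h :
  (b < d)%nat -> csum d (fun j => Cmul (h j) (unit_vec b y j)) = Cmul (h b) y.
Proof.
  intros Hb; rewrite <- (csum_delta d b (fun j => Cmul (h j) y)) by assumption.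
  apply csum_ext; intros j _; unfold unit_vec; destruct (Nat.eqb j b); [reflexivity|cring].
Qed.

Lemma csum_unit_vec_l d a x h :
  (a < d)%nat -> csum d (fun i => Cmul (Cconj (unit_vec a x i)) (h i)) = Cmul (Cconj x) (h a).
Proof.
  intros Ha; rewrite <- (csum_delta d a (fun i => Cmul (Cconj x) (h i))) by assumption.
  apply csum_ext; intros j _; unfold unit_vec; destruct (Nat.eqb j a); [reflexivity|cring].
Qed.

Lemma sesq_unit_vec_l d X a x v : (a < d)%nat ->
  sesq d X (unit_vec a x) v = Cmul (Cconj x) (csum d (fun j => Cmul (X a j) (v j))).
Proof.
  intros Ha; unfold sesq.
  rewrite (csum_ext d _ (fun i => Cmul (Cconj (unit_vec a x i))
                                   (csum d (fun j => Cmul (X i j) (v j))))).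
  - apply csum_unit_vec_l; assumption.
  - intros i _; rewrite csum_mul_l; apply csum_ext; intros; cring.
Qed.

Lemma sesq_unit_vec_r d X u b y : (b < d)%nat ->
  sesq d X u (unit_vec b y) = Cmul (csum d (fun i => Cmul (Cconj (u i)) (X i b))) y.
Proof.
  intros Hb; unfold sesq; rewrite csum_mul_r; apply csum_ext; intros i _.
  rewrite csum_unit_vec_r by assumption; cring.
Qed.

Lemma sesq_unit_vec d X a x b y : (a < d)%nat -> (b < d)%nat ->
  sesq d X (unit_vec a x) (unit_vec b y) = Cmul (Cmul (Cconj x) (X a b)) y.
Proof.
  intros Ha Hb; rewrite sesq_unit_vec_l, csum_unit_vec_r by assumption; cring.
Qed.

Lemma PSD_diag d X a : PSD d X -> (a < d)%nat -> Cim (X a a) = 0 /\ 0 <= Cre (X a a).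
Proof.
  intros HX Ha; destruct (HX (unit_vec a C1)) as [Him Hre].
  rewrite quad_sesq, sesq_unit_vec in Him, Hre by assumption; simpl in *; split; lra.
Qed.

Lemma PSD_herm d X a b : PSD d X -> (a < d)%nat -> (b < d)%nat -> X b a = Cconj (X a b).
Proof.
  intros HX Ha Hb; destruct (Nat.eq_dec a b) as [<-|Hab].
  - destruct (PSD_diag d X a HX Ha); apply Ceq; simpl; lra.
  - destruct (PSD_diag d X a HX Ha), (PSD_diag d X b HX Hb).
    (* the imaginary parts of <e_a + e_b, X (e_a + e_b)> and <e_a + i e_b, X (e_a + i e_b)> vanish *)
    destruct (HX (vadd (unit_vec a C1) (unit_vec b C1))) as [Q1 _].
    destruct (HX (vadd (unit_vec a C1) (unit_vec b (mkC 0 1)))) as [Q2 _].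
    rewrite quad_sesq, !sesq_addl, !sesq_addr, !sesq_unit_vec in Q1, Q2 by assumption.
    simpl in Q1, Q2; apply Ceq; simpl; lra.
Qed.

Lemma csum_Cre_nonneg n f : (forall i, (i < n)%nat -> 0 <= Cre (f i)) -> 0 <= Cre (csum n f).
Proof.
  induction n as [|n IH]; intros H; simpl; [lra|].
  specialize (H n ltac:(lia)) as Hn; assert (0 <= Cre (csum n f)) by (apply IH; intros; apply H; lia).
  lra.
Qed.

Lemma csum_Cim_zero n f : (forall i, (i < n)%nat -> Cim (f i) = 0) -> Cim (csum n f) = 0.
Proof.
  induction n as [|n IH]; intros H; simpl; [lra|].
  rewrite H, IH by first [lia | intros; apply H; lia]; lra.
Qed.

Lemma Mtrace_PSD_nonneg d M : PSD d M -> 0 <= Cre (Mtrace d M).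
Proof. intros HM; apply csum_Cre_nonneg; intros i Hi; apply (PSD_diag d M i HM Hi). Qed.

Lemma PSD_restrict d X : PSD (S d) X -> PSD d X.
Proof.
  intros HX v; set (v' := fun i => if Nat.ltb i d then v i else C0).
  replace (quad d X v) with (quad (S d) X v'); [apply HX|].
  unfold quad; rewrite csum_S.
  rewrite (csum_zero (S d) (fun j => Cmul (Cmul (Cconj (v' d)) (X d j)) (v' j))), Cadd_0_r.
  - apply csum_ext; intros i Hi; rewrite csum_S.
    replace (v' d) with C0 by (unfold v'; rewrite Nat.ltb_irrefl; reflexivity).
    rewrite Cmul_0_r, Cadd_0_r; apply csum_ext; intros j Hj; unfold v'.
    destruct (Nat.ltb_spec i d), (Nat.ltb_spec j d); try lia; reflexivity.
  - intros j _; unfold v'; rewrite Nat.ltb_irrefl; cring.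
Qed.

Definition shift_diag (e : R) (X : Mat) : Mat :=
  fun i j => Cadd (X i j) (if Nat.eqb i j then mkC e 0 else C0).

Lemma PSD_shift_diag d e X : 0 <= e -> PSD d X -> PSD d (shift_diag e X).
Proof.
  intros He HX v.
  set (w := csum d (fun i => Cmul (mkC e 0) (Cmul (Cconj (v i)) (v i)))).
  assert (Ew : quad d (shift_diag e X) v = Cadd (quad d X v) w).
  { unfold quad, w; rewrite <- csum_add; apply csum_ext; intros i Hi.
    rewrite <- (csum_delta d i (fun j => Cmul (mkC e 0) (Cmul (Cconj (v j)) (v j)))) by assumption.
    rewrite <- csum_add; apply csum_ext; intros j Hj; unfold shift_diag.
    rewrite Nat.eqb_sym; destruct (Nat.eqb_spec j i) as [->|]; cring. }
  assert (Cim w = 0) by (apply csum_Cim_zero; intros; simpl; ring).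
  assert (0 <= Cre w)
    by (apply csum_Cre_nonneg; intros i _; destruct (v i) as [p q]; simpl; nra).
  destruct (HX v); rewrite Ew; simpl; split; lra.
Qed.

Lemma tr_prod_shift_diag d e M X :
  tr_prod d M (shift_diag e X) = Cadd (tr_prod d M X) (Cmul (mkC e 0) (Mtrace d M)).
Proof.
  unfold tr_prod, Mtrace; rewrite csum_mul_l, <- csum_add; apply csum_ext; intros i Hi.
  rewrite <- (csum_delta d i (fun j => Cmul (mkC e 0) (M j j))) by assumption.
  rewrite <- csum_add; apply csum_ext; intros j Hj; unfold shift_diag.
  rewrite Nat.eqb_sym; destruct (Nat.eqb_spec i j) as [->|]; cring.
Qed.

Section Schur.
Variables (d : nat) (Y : Mat) (a : R).
Hypothesis HY : PSD (S d) Y.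
Hypothesis Ha : 0 < a.
Hypothesis Hdd : Y d d = mkC a 0.

Definition schur : Mat :=
  fun i j => Cadd (Y i j) (Cmul (mkC (- / a) 0) (Cmul (Y i d) (Y d j))).

Lemma schur_row j : schur d j = C0.
Proof. unfold schur; rewrite Hdd; apply Ceq; simpl; field; lra. Qed.

Lemma schur_col i : schur i d = C0.
Proof. unfold schur; rewrite Hdd; apply Ceq; simpl; field; lra. Qed.

Lemma PSD_schur : PSD (S d) schur.
Proof.
  intros v.
  set (r := csum (S d) (fun j => Cmul (Y d j) (v j))).
  set (l := csum (S d) (fun i => Cmul (Cconj (v i)) (Y i d))).
  set (beta := Cmul (mkC (- / a) 0) r).
  (* <v, schur v> = <w, Y w> for w = v + beta e_d *)
  replace (quad (S d) schur v) with (quad (S d) Y (vadd v (unit_vec d beta))); [apply HY|].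
  rewrite quad_sesq, sesq_addl, !sesq_addr, sesq_unit_vec, sesq_unit_vec_l, sesq_unit_vec_r
    by lia.
  fold l r; rewrite <- quad_sesq.
  replace (quad (S d) schur v) with (Cadd (quad (S d) Y v) (Cmul (mkC (- / a) 0) (Cmul l r))).
  - rewrite Hdd; unfold beta; destruct l as [l1 l2], r as [r1 r2]; apply Ceq; simpl; field; lra.
  - unfold quad, l, r; rewrite csum_mul_r, csum_mul_l, <- csum_add.
    apply csum_ext; intros i _; rewrite csum_mul_l, csum_mul_l, <- csum_add.
    apply csum_ext; intros j _; unfold schur; cring.
Qed.

Lemma tr_prod_schur M :
  tr_prod (S d) M Y =
  Cadd (tr_prod d M schur) (Cmul (mkC (/ a) 0) (quad (S d) M (fun j => Y j d))).
Proof.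
  transitivity (Cadd (tr_prod (S d) M schur) (Cmul (mkC (/ a) 0) (quad (S d) M (fun j => Y j d)))).
  - unfold tr_prod, quad; rewrite csum_mul_l, <- csum_add; apply csum_ext; intros i Hi.
    rewrite csum_mul_l, <- csum_add; apply csum_ext; intros j Hj.
    rewrite <- (PSD_herm (S d) Y i d HY Hi) by lia; unfold schur; cring.
  - f_equal; unfold tr_prod; rewrite csum_S.
    rewrite (csum_zero (S d) (fun j => Cmul (M d j) (schur j d)))
      by (intros j _; rewrite schur_col; apply Cmul_0_r).
    rewrite Cadd_0_r; apply csum_ext; intros i _.
    rewrite csum_S, schur_row, Cmul_0_r; apply Cadd_0_r.
Qed.

End Schur.

Lemma tr_prod_PSD_nonneg_corner d M Y a :
  (forall M X, PSD d M -> PSD d X -> 0 <= Cre (tr_prod d M X)) ->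
  PSD (S d) M -> PSD (S d) Y -> 0 < a -> Y d d = mkC a 0 ->
  0 <= Cre (tr_prod (S d) M Y).
Proof.
  intros IH HM HY Ha Hdd.
  rewrite (tr_prod_schur d Y a HY Ha Hdd M), Cre_Cadd, Cre_Cmul_real.
  assert (0 <= Cre (tr_prod d M (schur d Y a)))
    by (apply IH; apply PSD_restrict; [|apply PSD_schur]; assumption).
  assert (0 <= Cre (quad (S d) M (fun j => Y j d))) by apply HM.
  assert (0 < / a) by (apply Rinv_0_lt_compat; assumption).
  nra.
Qed.

Theorem tr_prod_PSD_nonneg d M X : PSD d M -> PSD d X -> 0 <= Cre (tr_prod d M X).
Proof.
  revert M X; induction d as [|d IH]; intros M X HM HX; [simpl; lra|].
  destruct (PSD_diag (S d) X d HX ltac:(lia)) as [Him Hre].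
  set (T := Cre (Mtrace (S d) M)).
  assert (HT : 0 <= T) by (apply Mtrace_PSD_nonneg; assumption).
  (* regularize the corner entry: tr(M (X + eI)) = tr(M X) + e tr M >= 0 for every e > 0 *)
  assert (Hshift : forall e, 0 < e -> 0 <= Cre (tr_prod (S d) M X) + e * T).
  { intros e He.
    replace (Cre (tr_prod (S d) M X) + e * T) with (Cre (tr_prod (S d) M (shift_diag e X)))
      by (rewrite tr_prod_shift_diag; unfold T; simpl; ring).
    apply (tr_prod_PSD_nonneg_corner d M _ (Cre (X d d) + e)); try assumption; try lra.
    - apply PSD_shift_diag; [lra | assumption].
    - unfold shift_diag; rewrite Nat.eqb_refl; apply Ceq; simpl; lra. }
  apply Rle_plus_epsilon; intros eps Heps.
  specialize (Hshift (eps / (T + 1)) ltac:(apply Rdiv_lt_0_compat; lra)).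
  assert (eps / (T + 1) * T <= eps).
  { apply (Rmult_le_reg_r (T + 1)); [lra|].
    replace (eps / (T + 1) * T * (T + 1)) with (eps * T) by (field; lra); nra. }
  lra.
Qed.

Lemma so_tensor_id_apply_1 a S X : so_tensor_id_apply a 1 S X = so_apply a S X.
Proof.
  apply functional_extensionality; intro I; apply functional_extensionality; intro J.
  unfold so_tensor_id_apply, so_apply; rewrite !Nat.div_1_r, !Nat.mod_1_r.
  apply csum_ext; intros i _; apply csum_ext; intros j _.
  rewrite !Nat.mul_1_r, !Nat.add_0_r; reflexivity.
Qed.

Lemma channel_PSD a b S X : is_channel a b S -> PSD a X -> PSD b (so_apply a S X).
Proof.
  intros [HCP _] HX; rewrite <- so_tensor_id_apply_1, <- (Nat.mul_1_r b).
  apply HCP; rewrite Nat.mul_1_r; assumption.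
Qed.

Lemma channel_tensor_id_trace a b k S X : is_channel a b S ->
  Mtrace (b * k) (so_tensor_id_apply a k S X) = Mtrace (a * k) X.
Proof.
  intros [_ HTP]; unfold Mtrace; rewrite !csum_mul_dim.
  (* the block of X with ancilla indices (p, p) *)
  set (Xp := fun p u v => X (u * k + p)%nat (v * k + p)%nat).
  rewrite (csum_ext b _ (fun i => csum k (fun p => so_apply a S (Xp p) i i))).
  - rewrite csum_swap, (csum_swap a k); apply csum_ext; intros p _; apply HTP.
  - intros i Hi; apply csum_ext; intros p Hp; unfold so_tensor_id_apply, so_apply, Xp.
    replace ((i * k + p) / k)%nat with i
      by (rewrite Nat.div_add_l, Nat.div_small by lia; lia).
    replace ((i * k + p) mod k)%nat with p
      by (rewrite Nat.add_comm, Nat.Div0.mod_add, Nat.mod_small by lia; reflexivity).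
    reflexivity.
Qed.

Lemma run_is_state din dout n s Phi :
  is_strategy din dout n s -> is_channel din dout Phi ->
  forall m, (m <= n)%nat ->
  is_state (run_dim din dout s m) (Phi_sharp din dout Phi s m).
Proof.
  intros [Hrho [Hpsi1 Hpsi]] HPhi m; induction m as [|m IH]; intros Hm; [exact Hrho|].
  destruct (IH ltac:(lia)) as [HPSD Htr].
  assert (Hc : is_channel (run_dim din dout s m) (din * s_dk s) (run_psi s m))
    by (destruct m; [exact Hpsi1 | apply Hpsi; lia]).
  unfold Phi_sharp; rewrite run_succ; split.
  - apply (proj1 HPhi), channel_PSD; assumption.
  - simpl; rewrite channel_tensor_id_trace, (proj2 Hc); assumption.
Qed.

Lemma is_state_dim_nonzero d X : is_state d X -> d <> 0%nat.
Proof. intros [_ Htr] ->; injection Htr; lra. Qed.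

Lemma tr_prod_Msum_list d (Ms : list Mat) X :
  Cre (tr_prod d (Msum_list Ms) X) = rsum_list (map (fun M => prob d M X) Ms).
Proof.
  induction Ms as [|M Ms IH]; simpl.
  - unfold tr_prod; rewrite csum_zero; [reflexivity|].
    intros i _; apply csum_zero; intros; cring.
  - rewrite <- IH; unfold prob; rewrite <- Cre_Cadd; f_equal.
    unfold tr_prod; rewrite <- csum_add; apply csum_ext; intros i _.
    rewrite <- csum_add; apply csum_ext; intros j _; unfold Msum_list; simpl; cring.
Qed.

Lemma povm_prob_sum d Ms X :
  is_povm d Ms -> rsum_list (map (fun M => prob d M X) Ms) = Cre (Mtrace d X).
Proof.
  intros [_ Hid]; rewrite <- tr_prod_Msum_list; f_equal; unfold tr_prod, Mtrace.
  apply csum_ext; intros i Hi.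
  rewrite <- (csum_delta d i (fun j => X j i)) by assumption.
  apply csum_ext; intros j Hj; rewrite Hid by assumption.
  rewrite Nat.eqb_sym; destruct (Nat.eqb_spec j i); [apply Cmul_1_l | apply Cmul_0_l].
Qed.

Lemma rsum_list_nonneg {A : Type} (l : list A) (f : A -> R) :
  (forall x, In x l -> 0 <= f x) -> 0 <= rsum_list (map f l).
Proof.
  induction l as [|x l IH]; intros H; simpl; [lra|].
  assert (0 <= f x) by (apply H; left; reflexivity).
  assert (0 <= rsum_list (map f l)) by (apply IH; intros; apply H; right; assumption).
  lra.
Qed.

Lemma derivable_pt_lim_rsum_list {A : Type} (l : list A) (f : A -> R -> R) (g : A -> R) x :
  (forall a, In a l -> derivable_pt_lim (f a) x (g a)) ->
  derivable_pt_lim (fun t => rsum_list (map (fun a => f a t) l)) x (rsum_list (map g l)).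
Proof.
  induction l as [|a l IH]; intros H; simpl; [apply derivable_pt_lim_const|].
  apply derivable_pt_lim_plus; [apply H; left; reflexivity|].
  apply IH; intros; apply H; right; assumption.
Qed.

Lemma derivable_pt_lim_at_zero_of_nonneg f x l :
  (forall t, 0 <= f t) -> f x = 0 -> derivable_pt_lim f x l -> l = 0.
Proof.
  intros Hpos H0 Hd.
  apply (deriv_minimum f (x - 1) (x + 1) x (exist _ l Hd)); try lra.
  intros; rewrite H0; apply Hpos.
Qed.

Lemma sq_le_of_quadratic_nonneg a b c :
  0 <= a -> (forall t, 0 <= t ^ 2 * a - 2 * t * b + c) -> b ^ 2 <= a * c.
Proof.
  intros Ha H; destruct (Req_dec a 0) as [->|Ha0].
  - destruct (Req_dec b 0) as [->|Hb]; [nra|].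
    specialize (H ((c + 1) / (2 * b))).
    replace (2 * ((c + 1) / (2 * b)) * b) with (c + 1) in H by (field; assumption); nra.
  - specialize (H (b / a)).
    replace ((b / a) ^ 2 * a - 2 * (b / a) * b + c) with (c - b ^ 2 / a) in H
      by (field; assumption).
    apply (Rmult_le_reg_r (/ a)); [apply Rinv_0_lt_compat; lra|].
    replace (a * c * / a) with c by (field; assumption); unfold Rdiv in H; lra.
Qed.

Lemma cauchy_schwarz_Jp {A : Type} (l : list (R * A)) (y0 : R) (P D : A -> R) :
  (forall x, In x l -> 0 <= P (snd x)) ->
  (forall x, In x l -> P (snd x) = 0 -> D (snd x) = 0) ->
  rsum_list (map (fun x => (fst x - y0) * D (snd x)) l) ^ 2 <=
  rsum_list (map (fun x => (fst x - y0) ^ 2 * P (snd x)) l) *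
  Jp (map (fun x => P (snd x)) l) (map (fun x => D (snd x)) l).
Proof.
  intros HP HD; apply sq_le_of_quadratic_nonneg.
  { apply rsum_list_nonneg; intros x Hx; apply Rmult_le_pos; [apply pow2_ge_0 | auto]. }
  intro t; induction l as [|[y M] l IH]; simpl; [lra|].
  specialize (IH (fun x Hx => HP x (or_intror Hx)) (fun x Hx => HD x (or_intror Hx))).
  specialize (HP (y, M) (or_introl eq_refl)); specialize (HD (y, M) (or_introl eq_refl)).
  simpl in HP, HD, IH.
  destruct (Rlt_dec 0 (P M)) as [Hp|Hp].
  - set (w := D M / P M).
    assert (Ew : D M = P M * w) by (unfold w; field; lra).
    rewrite Ew; replace (P M * w * (P M * w * 1) / P M) with (P M * w ^ 2) by (field; lra).
    (* the new summand is P M (t (y - y0) - w)^2 >= 0 *)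
    assert (0 <= P M * (t * (y - y0) - w) ^ 2) by (apply Rmult_le_pos; [lra | apply pow2_ge_0]).
    nra.
  - rewrite HD by lra; replace (P M) with 0 by lra; lra.
Qed.

Lemma classical_cramer_rao {A : Type} (l : list (R * A)) (P : R -> A -> R) (D : A -> R)
    (t0 dm : R) :
  (forall t x, In x l -> 0 <= P t (snd x)) ->
  (forall t, rsum_list (map (fun x => P t (snd x)) l) = 1) ->
  (forall x, In x l -> derivable_pt_lim (fun t => P t (snd x)) t0 (D (snd x))) ->
  derivable_pt_lim (fun t => rsum_list (map (fun x => fst x * P t (snd x)) l)) t0 dm ->
  dm ^ 2 <= rsum_list (map (fun x => (fst x - t0) ^ 2 * P t0 (snd x)) l) *
            Jp (map (fun x => P t0 (snd x)) l) (map (fun x => D (snd x)) l).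
Proof.
  intros Hpos Hsum HD Hdm.
  assert (HsumD : rsum_list (map (fun x => D (snd x)) l) = 0).
  { apply (uniqueness_limite (fun _ => 1) t0); [|apply derivable_pt_lim_const].
    apply (derivable_pt_lim_ext (fun t => rsum_list (map (fun x => P t (snd x)) l)));
      [exact Hsum|].
    apply derivable_pt_lim_rsum_list; exact HD. }
  assert (Hdm_eq : dm = rsum_list (map (fun x => (fst x - t0) * D (snd x)) l)).
  { transitivity (rsum_list (map (fun x => fst x * D (snd x)) l)
                  - t0 * rsum_list (map (fun x => D (snd x)) l)).
    - rewrite HsumD, Rmult_0_r, Rminus_0_r.
      apply (uniqueness_limite _ t0 _ _ Hdm).
      apply (derivable_pt_lim_rsum_list l (fun x t => fst x * P t (snd x))).
      intros x Hx; replace (fst x * D (snd x)) with (0 * P t0 (snd x) + fst x * D (snd x))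
        by ring.
      apply derivable_pt_lim_mult; [apply derivable_pt_lim_const | apply HD; assumption].
    - clear; induction l as [|x l IH]; simpl; [ring|]; rewrite <- IH; ring. }
  rewrite Hdm_eq; apply cauchy_schwarz_Jp.
  - intros; apply Hpos; assumption.
  - intros x Hx Hx0; apply (derivable_pt_lim_at_zero_of_nonneg (fun t => P t (snd x)) t0);
      auto.
Qed.

Lemma is_sup_div_nat_ge (S : R -> Prop) s n J q :
  (1 <= n)%nat -> is_sup S s -> S J -> ER_div_nat s n = ER_fin q -> J <= INR n * q.
Proof.
  intros Hn Hs HJ Hq; destruct s as [r|]; [|discriminate].
  injection Hq as <-; destruct Hs as [Hub _].
  assert (0 < INR n) by (apply lt_0_INR; lia).
  replace (INR n * (r / INR n)) with r by (field; lra); apply Hub; assumption.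
Qed.

Lemma eventually_gt_of_sq_le (x dm : nat -> R) (a : nat -> ER) (r c : R) :
  Un_cv dm 1 -> ER_lim a (ER_fin r) ->
  (forall n, (1 <= n)%nat -> 0 <= x n) ->
  (forall n q, (1 <= n)%nat -> a n = ER_fin q -> dm n ^ 2 <= x n * q) ->
  0 <= c -> c * r < 1 ->
  exists N, forall n, (N <= n)%nat -> c < x n.
Proof.
  intros Hdm Ha Hx Hb Hc Hcr.
  set (eta := (1 - c * r) / (2 * (1 + c))).
  assert (Heta : 0 < eta) by (apply Rdiv_lt_0_compat; lra).
  assert (Heta_c : eta * (1 + c) = (1 - c * r) / 2) by (unfold eta; field; lra).
  destruct (Ha eta Heta) as [N1 HN1].
  destruct (Hdm (Rmin (eta / 2) (1 / 2))) as [N2 HN2];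
    [apply Rmin_glb_lt; lra|].
  exists (1 + N1 + N2)%nat; intros n Hn.
  destruct (HN1 n ltac:(lia)) as [q [Hq Hqr]].
  specialize (HN2 n ltac:(lia)); unfold R_dist in HN2.
  specialize (Hb n q ltac:(lia) Hq); specialize (Hx n ltac:(lia)).
  apply Rabs_def2 in HN2; apply Rabs_def2 in Hqr.
  pose proof (Rmin_l (eta / 2) (1 / 2)); pose proof (Rmin_r (eta / 2) (1 / 2)).
  assert (Hd2 : 1 - eta < dm n ^ 2) by nra.
  assert (Hq0 : 0 < q) by nra.
  destruct (Rlt_or_le c (x n)) as [|Hxc]; [assumption|exfalso].
  assert (x n * q <= c * (r + eta)) by nra.
  nra.
Qed.

Lemma liminf_ge_inv_of_sq_le (x dm : nat -> R) (a : nat -> ER) (g : ER) :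
  Un_cv dm 1 -> ER_lim a g ->
  (forall n, (1 <= n)%nat -> 0 <= x n) ->
  (forall n q, (1 <= n)%nat -> a n = ER_fin q -> dm n ^ 2 <= x n * q) ->
  liminf_ge x (ER_inv g).
Proof.
  intros Hdm Ha Hx Hb c Hc.
  destruct (Rlt_or_le c 0) as [Hneg|Hc0].
  { exists 1%nat; intros n Hn; specialize (Hx n Hn); lra. }
  destruct g as [r|]; simpl in Hc; [|lra].
  apply (eventually_gt_of_sq_le x dm a r c); try assumption.
  destruct (Rle_dec r 0) as [Hr|Hr]; simpl in Hc; [nra|].
  apply Rnot_le_lt in Hr.
  apply (Rmult_lt_compat_r r) in Hc; [|assumption].
  rewrite Rinv_l in Hc by lra; lra.
Qed.

Section Estimator.
Variables (din dout : nat) (Phi Delta : R -> Superop) (theta0 : R) (est : estimator).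
Hypothesis Hch : forall theta, is_channel din dout (Phi theta).
Hypothesis Hdiff : is_derivative_family din dout Phi Delta.
Hypothesis Hest : is_estimator din dout est.

Lemma estimator_output_is_state n t : (1 <= n)%nat ->
  is_state (dout * s_dk (fst (est n))) (Phi_sharp din dout (Phi t) (fst (est n)) n).
Proof.
  intros Hn; destruct n as [|m]; [lia|].
  exact (run_is_state din dout (S m) _ (Phi t) (proj1 (Hest _ Hn)) (Hch t) (S m) (le_n _)).
Qed.

Lemma estimator_prob_nonneg n t M : (1 <= n)%nat ->
  In M (map snd (snd (est n))) ->
  0 <= prob (dout * s_dk (fst (est n))) M (Phi_sharp din dout (Phi t) (fst (est n)) n).
Proof.
  intros Hn HM; destruct (proj2 (Hest n Hn)) as [HPSD _].
  apply tr_prod_PSD_nonneg; [rewrite Forall_forall in HPSD; auto|].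
  apply estimator_output_is_state; assumption.
Qed.

Lemma estimator_prob_deriv n M : (1 <= n)%nat ->
  derivable_pt_lim
    (fun t => prob (dout * s_dk (fst (est n))) M (Phi_sharp din dout (Phi t) (fst (est n)) n))
    theta0
    (prob (dout * s_dk (fst (est n))) M
       (Delta_sharp din dout (Phi theta0) (Delta theta0) (fst (est n)) n)).
Proof.
  intros Hn; unfold prob, tr_prod.
  apply Cderivable_pt_lim_csum; intros i Hi; apply Cderivable_pt_lim_csum; intros j Hj.
  apply Cderivable_pt_lim_mul_const_l, Cderivable_Phi_sharp.
  - intros; apply Hdiff; assumption.
  - pose proof (is_state_dim_nonzero _ _ (proj1 (proj1 (Hest n Hn)))); lia.
  - right; split; assumption.
Qed.

Lemma estimator_variance_nonneg n : (1 <= n)%nat ->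
  0 <= est_expect din dout Phi est theta0 n (fun y => (y - theta0) ^ 2).
Proof.
  intros Hn; apply rsum_list_nonneg; intros x Hx.
  apply Rmult_le_pos; [apply pow2_ge_0|].
  apply estimator_prob_nonneg; [|apply in_map]; assumption.
Qed.

Lemma estimator_cramer_rao n dm : (1 <= n)%nat ->
  derivable_pt_lim (fun t => est_expect din dout Phi est t n (fun y => y)) theta0 dm ->
  exists J, Jset din dout (Phi theta0) (Delta theta0) n J /\
    dm ^ 2 <= est_expect din dout Phi est theta0 n (fun y => (y - theta0) ^ 2) * J.
Proof.
  intros Hn Hdm; eexists; split.
  - exists (fst (est n)), (map snd (snd (est n))).
    split; [|split]; [apply Hest; assumption .. |].
    rewrite !map_map; reflexivity.
  - unfold est_expect; cbv zeta.
    apply (classical_cramer_rao (snd (est n))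
             (fun t M => prob (dout * s_dk (fst (est n))) M
                           (Phi_sharp din dout (Phi t) (fst (est n)) n))
             (fun M => prob (dout * s_dk (fst (est n))) M
                         (Delta_sharp din dout (Phi theta0) (Delta theta0) (fst (est n)) n)));
      try exact Hdm.
    + intros t x Hx; apply estimator_prob_nonneg; [|apply in_map]; assumption.
    + intro t; change 1 with (Cre C1); rewrite <- (proj2 (estimator_output_is_state n t Hn)).
      rewrite <- povm_prob_sum with (Ms := map snd (snd (est n))) by (apply Hest; assumption).
      rewrite map_map; reflexivity.
    + intros x _; apply estimator_prob_deriv; assumption.
Qed.

End Estimator.

Theorem mainTheorem9 (din dout : nat) (Phi Delta : R -> Superop)
  (Hch : forall theta : R, is_channel din dout (Phi theta))
  (Hdiff : is_derivative_family din dout Phi Delta)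
  (theta0 : R) (g : ER)
  (Hg : Gmin_is din dout (Phi theta0) (Delta theta0) g)
  (est : estimator)
  (Hest : is_estimator din dout est)
  (Hunb : asymp_unbiased din dout Phi est) :
  liminf_ge
    (fun n => INR n * est_expect din dout Phi est theta0 n
                        (fun y => (y - theta0) ^ 2))
    (ER_inv g).
Proof.
  destruct (Hunb theta0) as [_ [dm [Hdm Hdm1]]].
  destruct Hg as [sup [Hsup Hlim]].
  apply (liminf_ge_inv_of_sq_le _ dm _ _ Hdm1 Hlim).
  - intros n Hn; apply Rmult_le_pos; [apply pos_INR|].
    apply (estimator_variance_nonneg din dout Phi); assumption.
  - intros n q Hn Hq.
    pose proof (estimator_variance_nonneg din dout Phi theta0 est Hch Hest n Hn) as Hvar.
    destruct (estimator_cramer_rao din dout Phi Delta theta0 est Hch Hdiff Hest n (dm n) Hn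
                (Hdm n)) as [J [HJ Hcr]].
    pose proof (is_sup_div_nat_ge _ _ n J q Hn (Hsup n) HJ Hq) as HJq.
    nra.
Qed.
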